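(* Let the observer be at $(1,0,0)$ and let $r=5/4$. For $\ell\ge 1$ let $R_\ell$ be the rectangle in the plane $x=0$ with vertices $(0,y_i,z_j)$, $i,j\in\{1,2\}$, where $$y_{1,2}=\frac{r}{\sqrt2}\mp\frac{\ell}{2},\qquad z_{1,2}=\frac{r}{\sqrt2}\mp\frac{1}{2\ell},$$ and let $\Omega(\ell)$ be the solid angle subtended by $R_\ell$ at the observer. Then the maximum of $\Omega(\ell)$ over $\ell\ge1$ is not attained at $\ell=1$; it is attained at $\ell_{\max}=1.66977459936793782921\ldots$. (In particular, among these rectangles of fixed area and fixed center, the one of largest solid angle need not be a square.)
   Context: The solid angle subtended at a point $P$ by a planar region $S$ is the area of the radial projection of $S$ onto the unit sphere centered at $P$. For an observer at $(x_0,0,0)$ with $x_0>0$ and the rectangle above, it equals $F(y_2,z_2)-F(y_1,z_2)-F(y_2,z_1)+F(y_1,z_1)$ where $F(y,z)=\arctan\!\big(yz/(x_0\sqrt{x_0^2+y^2+z^2})\big)$. *)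

From Stdlib Require Import Reals Lra.
Open Scope R_scope.

Definition Fcorner (x0 y z : R) : R :=
  atan (y * z / (x0 * sqrt (x0 ^ 2 + y ^ 2 + z ^ 2))).

Definition solid_angle_rect (x0 y1 y2 z1 z2 : R) : R :=
  Fcorner x0 y2 z2 - Fcorner x0 y1 z2 - Fcorner x0 y2 z1 + Fcorner x0 y1 z1.

Definition r_param : R := 5 / 4.

Definition y1 (l : R) : R := r_param / sqrt 2 - l / 2.
Definition y2 (l : R) : R := r_param / sqrt 2 + l / 2.
Definition z1 (l : R) : R := r_param / sqrt 2 - 1 / (2 * l).
Definition z2 (l : R) : R := r_param / sqrt 2 + 1 / (2 * l).

Definition Omega (l : R) : R := solid_angle_rect 1 (y1 l) (y2 l) (z1 l) (z2 l).

(* The derivative of [Omega] vanishes at [l = 1], where the rectangle is a square and the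
   symmetry [y <-> z] of [Fcorner] applies.  Everything else is validated numerics: [Omega']
   is written out by the chain rule and enclosed, together with its symbolic derivative, by
   interval arithmetic on dyadic numbers.  On a finite subdivision this certifies
   [Omega'' > 0] on [1, 1.01] (so [Omega' >= 0] there), [Omega' > 0] on [1.01, a] and
   [Omega' < 0] on [b, 10], where [a] is the lower decimal bound of the statement and
   [b = a + 7 * 10^-21]; in the variable [t = 1/l], [Omega] is increasing in [t] on
   [0, 1/10], so [Omega] decreases for [l >= 10].  Hence a maximum of the continuous [Omega]
   on [a, b] is a maximum on [1, oo), and it exceeds [Omega 1]. *)

From Stdlib Require Import Reals QArith Qreals Qround ZArith Lia Lra.
From Stdlib Require List.
Import List.ListNotations.
Open Scope R_scope.

Lemma derivable_pt_lim_eq_deriv f x l l' :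
  derivable_pt_lim f x l -> l = l' -> derivable_pt_lim f x l'.
Proof. now intros D <-. Qed.

Section DerivativeSign.
Variables (f f' : R -> R) (a b : R).
Hypothesis f_deriv : forall x, a <= x <= b -> derivable_pt_lim f x (f' x).

Lemma increment_by_mvt u v : a <= u -> u <= v -> v <= b ->
  exists c, u <= c <= v /\ f v - f u = f' c * (v - u).
Proof.
  intros au uv vb.
  destruct (Req_dec u v) as [<- | neq]; [exists u; split; [lra | ring] |].
  destruct (MVT_cor3 f f' u v) as (c & uc & cv & E); [lra | intros; apply f_deriv; lra |].
  exists c; split; [lra | rewrite E; ring].
Qed.

Lemma nondecreasing_of_deriv_nonneg :
  (forall x, a <= x <= b -> 0 <= f' x) ->
  forall u v, a <= u -> u <= v -> v <= b -> f u <= f v.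
Proof.
  intros pos u v au uv vb.
  destruct (increment_by_mvt u v au uv vb) as (c & Hc & E).
  assert (0 <= f' c) by (apply pos; lra).
  nra.
Qed.

Lemma increasing_of_deriv_pos :
  (forall x, a <= x <= b -> 0 < f' x) ->
  forall u v, a <= u -> u < v -> v <= b -> f u < f v.
Proof.
  intros pos u v au uv vb.
  destruct (increment_by_mvt u v au (Rlt_le _ _ uv) vb) as (c & Hc & E).
  assert (0 < f' c) by (apply pos; lra).
  nra.
Qed.

Lemma nonincreasing_of_deriv_nonpos :
  (forall x, a <= x <= b -> f' x <= 0) ->
  forall u v, a <= u -> u <= v -> v <= b -> f v <= f u.
Proof.
  intros neg u v au uv vb.
  destruct (increment_by_mvt u v au uv vb) as (c & Hc & E).
  assert (f' c <= 0) by (apply neg; lra).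
  nra.
Qed.

Lemma lipschitz_of_deriv_bound K :
  (forall x, a <= x <= b -> Rabs (f' x) <= K) ->
  forall u v, a <= u <= b -> a <= v <= b -> Rabs (f v - f u) <= K * Rabs (v - u).
Proof.
  intros bound u v Hu Hv.
  assert (in_ab : forall c, Rmin u v <= c <= Rmax u v -> a <= c <= b).
  { intros c [Hmin Hmax]; split.
    - apply Rle_trans with (Rmin u v); [apply Rmin_glb |]; lra.
    - apply Rle_trans with (Rmax u v); [| apply Rmax_lub]; lra. }
  destruct (MVT_abs f f' u v) as (c & E & Hc); [intros; apply f_deriv, in_ab; auto |].
  rewrite E. apply Rmult_le_compat_r; [apply Rabs_pos | apply bound, in_ab, Hc].
Qed.

Lemma mean_value_lower_bound K m :
  (forall x, a <= x <= b -> Rabs (f' x) <= K) -> m = (a + b) / 2 ->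
  forall x, a <= x <= b -> f m - K * (m - a) <= f x.
Proof.
  intros bound m_mid x Hx.
  pose proof (lipschitz_of_deriv_bound K bound x m Hx ltac:(lra)) as L.
  assert (0 <= K) by (apply Rle_trans with (Rabs (f' x)); [apply Rabs_pos | auto]).
  assert (Rabs (m - x) <= m - a) by (apply Rabs_le; lra).
  assert (K * Rabs (m - x) <= K * (m - a)) by (apply Rmult_le_compat_l; auto).
  pose proof (Rle_abs (f m - f x)). lra.
Qed.

End DerivativeSign.

Lemma max_attained_in_interval (f : R -> R) (lo a b : R) :
  a <= b -> (forall x, a <= x <= b -> continuity_pt f x) ->
  (forall x, lo <= x <= a -> f x <= f a) -> (forall x, b <= x -> f x <= f b) ->
  exists M, a <= M <= b /\ forall x, lo <= x -> f x <= f M.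
Proof.
  intros ab cont left right.
  destruct (continuity_ab_maj f a b ab cont) as (M & maxM & HM).
  exists M; split; [exact HM |].
  intros x lox.
  destruct (Rle_dec x a) as [xa | xa]; [apply Rle_trans with (f a); [apply left | apply maxM]; lra |].
  destruct (Rle_dec x b) as [xb | xb]; [apply maxM; lra |].
  apply Rle_trans with (f b); [apply right | apply maxM]; lra.
Qed.

(** * Expressions and their symbolic derivatives *)

(* [Param] is one fixed real constant, the parameter [c] of [eval]; an interval evaluation
   encloses it once instead of at each of its occurrences. *)
Inductive expr : Type :=
  | Var
  | Cst (z : Z)
  | Param
  | Add (a b : expr)
  | Sub (a b : expr)
  | Mul (a b : expr)
  | Div (a b : expr)
  | Sqrt (a : expr)
  | Atan (a : expr)
  | Pow (a : expr) (n : nat).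

Section Semantics.
Variable c : R.

Fixpoint eval (e : expr) (x : R) : R :=
  match e with
  | Var => x
  | Cst z => IZR z
  | Param => c
  | Add a b => eval a x + eval b x
  | Sub a b => eval a x - eval b x
  | Mul a b => eval a x * eval b x
  | Div a b => eval a x / eval b x
  | Sqrt a => sqrt (eval a x)
  | Atan a => atan (eval a x)
  | Pow a n => eval a x ^ n
  end.

Fixpoint defined (e : expr) (x : R) : Prop :=
  match e with
  | Var | Cst _ | Param => True
  | Add a b | Sub a b | Mul a b => defined a x /\ defined b x
  | Div a b => defined a x /\ defined b x /\ eval b x <> 0
  | Sqrt a => defined a x /\ 0 < eval a x
  | Atan a | Pow a _ => defined a x
  end.

End Semantics.

Fixpoint has_var (e : expr) : bool :=
  match e with
  | Var => true
  | Cst _ | Param => false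
  | Add a b | Sub a b | Mul a b | Div a b => has_var a || has_var b
  | Sqrt a | Atan a | Pow a _ => has_var a
  end.

Definition is_zero (e : expr) : bool := match e with Cst 0 => true | _ => false end.
Definition is_one (e : expr) : bool := match e with Cst 1 => true | _ => false end.

Lemma is_zero_eq e : is_zero e = true -> e = Cst 0.
Proof. destruct e; try discriminate; destruct z; easy. Qed.

Lemma is_one_eq e : is_one e = true -> e = Cst 1.
Proof. destruct e; try discriminate; destruct z as [| [] |]; easy. Qed.

Definition mkAdd a b := if is_zero a then b else if is_zero b then a else Add a b.
Definition mkSub a b := if is_zero b then a else Sub a b.
Definition mkMul a b :=
  if is_zero a || is_zero b then Cst 0
  else if is_one a then b else if is_one b then a else Mul a b.
Definition mkDiv a b := if is_zero a then Cst 0 else Div a b.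

Section SmartConstructors.
Variables (c x : R) (a b : expr).

Ltac smart_cases :=
  repeat match goal with
  | |- context [is_zero ?e] =>
      let E := fresh in destruct (is_zero e) eqn:E; [apply is_zero_eq in E; subst e |]
  | |- context [is_one ?e] =>
      let E := fresh in destruct (is_one e) eqn:E; [apply is_one_eq in E; subst e |]
  end; simpl; try unfold Rdiv; ring.

Lemma eval_mkAdd : eval c (mkAdd a b) x = eval c a x + eval c b x.
Proof. unfold mkAdd; smart_cases. Qed.
Lemma eval_mkSub : eval c (mkSub a b) x = eval c a x - eval c b x.
Proof. unfold mkSub; smart_cases. Qed.
Lemma eval_mkMul : eval c (mkMul a b) x = eval c a x * eval c b x.
Proof. unfold mkMul; smart_cases. Qed.
Lemma eval_mkDiv : eval c (mkDiv a b) x = eval c a x / eval c b x.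
Proof. unfold mkDiv; smart_cases. Qed.

End SmartConstructors.

Fixpoint deriv (e : expr) : expr :=
  match e with
  | Var => Cst 1
  | Cst _ | Param => Cst 0
  | Add a b => mkAdd (deriv a) (deriv b)
  | Sub a b => mkSub (deriv a) (deriv b)
  | Mul a b => mkAdd (mkMul (deriv a) b) (mkMul a (deriv b))
  | Div a b =>
      if has_var b then Div (mkSub (mkMul (deriv a) b) (mkMul a (deriv b))) (Pow b 2)
      else mkDiv (deriv a) b
  | Sqrt a => mkDiv (deriv a) (Mul (Cst 2) (Sqrt a))
  | Atan a => mkDiv (deriv a) (Add (Cst 1) (Pow a 2))
  | Pow a n => mkMul (mkMul (Cst (Z.of_nat n)) (Pow a (pred n))) (deriv a)
  end.

Lemma deriv_const e : has_var e = false -> deriv e = Cst 0.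
Proof.
  induction e; simpl; intro H; try discriminate; try reflexivity;
    try (destruct (orb_false_elim _ _ H) as [Ha Hb]);
    repeat match goal with IH : _ = false -> deriv _ = _ |- _ =>
      rewrite IH by assumption; clear IH end;
    try reflexivity.
  - unfold mkMul; now rewrite orb_true_r.
  - now rewrite Hb.
  - unfold mkMul; now rewrite orb_true_r.
Qed.

Theorem deriv_correct c e x :
  defined c e x -> derivable_pt_lim (eval c e) x (eval c (deriv e) x).
Proof.
  induction e as [| z | | a IHa b IHb | a IHa b IHb | a IHa b IHb | a IHa b IHb
                 | a IHa | a IHa | a IHa n]; simpl deriv.
  - intros _. apply derivable_pt_lim_id.
  - intros _. apply derivable_pt_lim_const.
  - intros _. apply derivable_pt_lim_const.
  - intros [Da Db]. rewrite eval_mkAdd.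
    apply (derivable_pt_lim_plus (eval c a) (eval c b)); auto.
  - intros [Da Db]. rewrite eval_mkSub.
    apply (derivable_pt_lim_minus (eval c a) (eval c b)); auto.
  - intros [Da Db]. rewrite eval_mkAdd, !eval_mkMul.
    eapply derivable_pt_lim_eq_deriv;
      [apply (derivable_pt_lim_mult (eval c a) (eval c b)); auto | ring].
  - intros (Da & Db & b_nz).
    pose proof (derivable_pt_lim_div (eval c a) (eval c b) x _ _ (IHa Da) (IHb Db) b_nz) as D.
    destruct (has_var b) eqn:Hb.
    + eapply derivable_pt_lim_eq_deriv; [exact D |].
      simpl; rewrite eval_mkSub, !eval_mkMul; unfold Rsqr; field; auto.
    + rewrite (deriv_const b Hb) in D.
      eapply derivable_pt_lim_eq_deriv; [exact D |].
      rewrite eval_mkDiv; simpl; unfold Rsqr; field; auto.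
  - intros [Da a_pos]. rewrite eval_mkDiv.
    eapply derivable_pt_lim_eq_deriv.
    + apply (derivable_pt_lim_comp (eval c a) sqrt); auto. now apply derivable_pt_lim_sqrt.
    + assert (0 < sqrt (eval c a x)) by now apply sqrt_lt_R0.
      simpl; field; lra.
  - intros Da. rewrite eval_mkDiv.
    eapply derivable_pt_lim_eq_deriv.
    + apply (derivable_pt_lim_comp (eval c a) atan); auto. apply derivable_pt_lim_atan.
    + assert (0 <= eval c a x ^ 2) by apply pow2_ge_0.
      simpl; field; simpl in *; lra.
  - intros Da. rewrite !eval_mkMul.
    eapply derivable_pt_lim_eq_deriv.
    + apply (derivable_pt_lim_comp (eval c a) (fun y => y ^ n)); auto.
      apply derivable_pt_lim_pow.
    + simpl; rewrite INR_IZR_INZ; ring.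
Qed.

Lemma derivable_pt_lim_eval c e x l :
  defined c e x -> eval c (deriv e) x = l -> derivable_pt_lim (eval c e) x l.
Proof. intros D <-; apply deriv_correct, D. Qed.

(** * Validated interval arithmetic on dyadic numbers *)

Lemma Rinv_between l h y : l <= y <= h -> 0 < l \/ h < 0 -> / h <= / y <= / l.
Proof.
  intros [ly yh] [l_pos | h_neg]; [split; apply Rinv_le_contravar; lra |].
  enough (/ - l <= / - y <= / - h) by (rewrite !Rinv_opp in *; lra).
  split; apply Rinv_le_contravar; lra.
Qed.

Lemma product_between_corners a b c d x y m M :
  a <= x <= b -> c <= y <= d ->
  m <= a * c -> m <= a * d -> m <= b * c -> m <= b * d ->
  a * c <= M -> a * d <= M -> b * c <= M -> b * d <= M -> m <= x * y <= M.
Proof.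
  intros Hx Hy.
  destruct (Rle_dec 0 x), (Rle_dec 0 c), (Rle_dec 0 d); split; nra.
Qed.

Lemma square_between l h x : l <= x <= h ->
  (0 <= l -> l * l <= x * x <= h * h) /\ (h <= 0 -> h * h <= x * x <= l * l) /\
  (x * x <= l * l \/ x * x <= h * h).
Proof. intros Hx; repeat split; intros; destruct (Rle_dec 0 x); nra. Qed.

Lemma IZR_div_le (a b : Z) : (b <> 0)%Z -> IZR (a / b) <= IZR a / IZR b.
Proof.
  assert (pos : forall a b, (0 < b)%Z -> IZR (a / b) <= IZR a / IZR b).
  { clear; intros a b b_pos. apply IZR_lt in b_pos.
    apply Rmult_le_reg_r with (IZR b); [exact b_pos |].
    unfold Rdiv; rewrite Rmult_assoc, Rinv_l, Rmult_1_r by lra.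
    rewrite <- mult_IZR; apply IZR_le.
    pose proof (Z.mul_div_le a b ltac:(apply lt_IZR; exact b_pos)); lia. }
  intros b_nz. destruct (Z_lt_le_dec 0 b) as [b_pos | b_neg]; [auto |].
  rewrite <- Z.div_opp_opp by lia.
  replace (IZR a / IZR b) with (IZR (- a) / IZR (- b))
    by (rewrite !opp_IZR; field; apply not_0_IZR; lia).
  apply pos; lia.
Qed.

Lemma IZR_div_ceil_ge (a b : Z) : (b <> 0)%Z -> IZR a / IZR b <= IZR (- (- a / b)).
Proof.
  intros b_nz. pose proof (IZR_div_le (- a) b b_nz).
  rewrite !opp_IZR in *. unfold Rdiv in *. lra.
Qed.

Section DyadicIntervals.
Variables (k s : Z).
Hypotheses (k_nonneg : (0 <= k)%Z) (s_pow : s = (2 ^ k)%Z).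

Definition scaled (m : Z) : R := IZR m / IZR s.
Definition contains (I : Z * Z) (x : R) : Prop := scaled (fst I) <= x <= scaled (snd I).

Lemma scale_pos : 0 < IZR s.
Proof. apply IZR_lt. rewrite s_pow. apply Z.pow_pos_nonneg; lia. Qed.

Lemma Rdiv_scale_le u v : u <= v -> u / IZR s <= v / IZR s.
Proof.
  pose proof scale_pos. intros. unfold Rdiv.
  apply Rmult_le_compat_r; [left; apply Rinv_0_lt_compat |]; lra.
Qed.

Lemma scaled_le a b : (a <= b)%Z -> scaled a <= scaled b.
Proof. intros; apply Rdiv_scale_le, IZR_le; auto. Qed.

Lemma scaled_lt a b : (a < b)%Z -> scaled a < scaled b.
Proof.
  pose proof scale_pos. intros ab%IZR_lt. unfold scaled, Rdiv.
  apply Rmult_lt_compat_r; [apply Rinv_0_lt_compat |]; lra.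
Qed.

Lemma scaled_0 : scaled 0 = 0.
Proof. unfold scaled, Rdiv; ring. Qed.

Lemma scaled_pos a : (0 < a)%Z -> 0 < scaled a.
Proof. rewrite <- scaled_0; apply scaled_lt. Qed.

Lemma scaled_neg a : (a < 0)%Z -> scaled a < 0.
Proof. rewrite <- scaled_0; apply scaled_lt. Qed.

Lemma scaled_nonneg a : (0 <= a)%Z -> 0 <= scaled a.
Proof. rewrite <- scaled_0; apply scaled_le. Qed.

Lemma scaled_nonpos a : (a <= 0)%Z -> scaled a <= 0.
Proof. rewrite <- scaled_0; apply scaled_le. Qed.

Lemma scaled_add a b : scaled (a + b) = scaled a + scaled b.
Proof. unfold scaled; rewrite plus_IZR; field; pose proof scale_pos; lra. Qed.

Lemma scaled_sub a b : scaled (a - b) = scaled a - scaled b.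
Proof. unfold scaled; rewrite minus_IZR; field; pose proof scale_pos; lra. Qed.

Lemma scaled_opp a : scaled (- a) = - scaled a.
Proof. unfold scaled; rewrite opp_IZR; unfold Rdiv; ring. Qed.

Lemma scaled_mul a b : scaled a * scaled b = scaled (a * b) / IZR s.
Proof. unfold scaled; rewrite mult_IZR; field; pose proof scale_pos; lra. Qed.

Lemma scaled_cst z : scaled (z * s) = IZR z.
Proof. unfold scaled; rewrite mult_IZR; field; pose proof scale_pos; lra. Qed.

Definition floor_rescale (x : Z) : Z := Z.shiftr x k.
Definition ceil_rescale (x : Z) : Z := (- Z.shiftr (- x) k)%Z.

Lemma scaled_floor_rescale x : scaled (floor_rescale x) <= scaled x / IZR s.
Proof.
  unfold scaled, floor_rescale. rewrite Z.shiftr_div_pow2, <- s_pow by lia.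
  apply Rdiv_scale_le, IZR_div_le. pose proof scale_pos. intros ->; lra.
Qed.

Lemma scaled_ceil_rescale x : scaled x / IZR s <= scaled (ceil_rescale x).
Proof.
  unfold scaled, ceil_rescale. rewrite Z.shiftr_div_pow2, <- s_pow by lia.
  apply Rdiv_scale_le, IZR_div_ceil_ge. pose proof scale_pos. intros ->; lra.
Qed.

Definition iconst (z : Z) : Z * Z := (z * s, z * s)%Z.
Definition iadd (I J : Z * Z) : Z * Z := (fst I + fst J, snd I + snd J)%Z.
Definition isub (I J : Z * Z) : Z * Z := (fst I - snd J, snd I - fst J)%Z.

Definition imul (I J : Z * Z) : Z * Z :=
  let (a, b) := I in let (c, d) := J in
  (floor_rescale (Z.min (Z.min (a * c) (a * d)) (Z.min (b * c) (b * d))),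
   ceil_rescale (Z.max (Z.max (a * c) (a * d)) (Z.max (b * c) (b * d)))).

Definition isqr (I : Z * Z) : Z * Z :=
  let (l, h) := I in
  if (0 <=? l)%Z then (floor_rescale (l * l), ceil_rescale (h * h))
  else if (h <=? 0)%Z then (floor_rescale (h * h), ceil_rescale (l * l))
  else (0%Z, ceil_rescale (Z.max (l * l) (h * h))).

Fixpoint ipow_mul (I : Z * Z) (n : nat) : Z * Z :=
  match n with O => iconst 1 | S n => imul I (ipow_mul I n) end.

(* Squares get the sharper enclosure of [isqr]. *)
Definition ipow (I : Z * Z) (n : nat) : Z * Z :=
  match n with 2%nat => isqr I | _ => ipow_mul I n end.

Definition iinv (I : Z * Z) : Z * Z :=
  let (l, h) := I in (s * s / h, - (- (s * s) / l))%Z.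

Definition isqrt (I : Z * Z) : Z * Z :=
  let (l, h) := I in (Z.sqrt (l * s), Z.sqrt (h * s) + 1)%Z.

Definition iatan : Z * Z := (-2 * s, 2 * s)%Z.

Lemma iconst_sound z : contains (iconst z) (IZR z).
Proof. unfold contains, iconst; simpl; rewrite scaled_cst; lra. Qed.

Lemma iadd_sound I J x y : contains I x -> contains J y -> contains (iadd I J) (x + y).
Proof. unfold contains, iadd; simpl; rewrite !scaled_add; lra. Qed.

Lemma isub_sound I J x y : contains I x -> contains J y -> contains (isub I J) (x - y).
Proof. unfold contains, isub; simpl; rewrite !scaled_sub; lra. Qed.

Lemma imul_sound I J x y : contains I x -> contains J y -> contains (imul I J) (x * y).
Proof.
  destruct I as [a b], J as [c d]; unfold contains, imul; simpl; intros Hx Hy.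
  set (lo := Z.min _ _); set (hi := Z.max _ _).
  pose proof (scaled_floor_rescale lo); pose proof (scaled_ceil_rescale hi).
  enough (scaled lo / IZR s <= x * y <= scaled hi / IZR s) by lra.
  apply (product_between_corners _ _ _ _ _ _ _ _ Hx Hy);
    rewrite scaled_mul; apply Rdiv_scale_le, scaled_le; unfold lo, hi; lia.
Qed.

Lemma isqr_sound I x : contains I x -> contains (isqr I) (x * x).
Proof.
  destruct I as [l h]; unfold contains, isqr; simpl; intros Hx.
  destruct (square_between _ _ _ Hx) as (pos & neg & mixed).
  pose proof (scaled_mul l l); pose proof (scaled_mul h h).
  destruct (Z.leb_spec 0 l) as [l_nonneg | l_neg]; simpl.
  { pose proof (scaled_floor_rescale (l * l)); pose proof (scaled_ceil_rescale (h * h)).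
    apply scaled_nonneg in l_nonneg.
    specialize (pos l_nonneg); lra. }
  destruct (Z.leb_spec h 0) as [h_nonpos | h_pos]; simpl.
  { pose proof (scaled_floor_rescale (h * h)); pose proof (scaled_ceil_rescale (l * l)).
    apply scaled_nonpos in h_nonpos.
    specialize (neg h_nonpos); lra. }
  set (m := Z.max (l * l) (h * h)).
  pose proof (scaled_ceil_rescale m).
  assert (scaled (l * l) / IZR s <= scaled m / IZR s) by (apply Rdiv_scale_le, scaled_le; lia).
  assert (scaled (h * h) / IZR s <= scaled m / IZR s) by (apply Rdiv_scale_le, scaled_le; lia).
  rewrite scaled_0; split; [nra | lra].
Qed.

Lemma contains_Rabs_le l h x : contains (l, h) x -> Rabs x <= scaled (Z.max (- l) h).
Proof.
  unfold contains; simpl; intros Hx.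
  pose proof (scaled_le (- l) (Z.max (- l) h) ltac:(lia)).
  pose proof (scaled_le h (Z.max (- l) h) ltac:(lia)).
  rewrite scaled_opp in *. apply Rabs_le; lra.
Qed.

Lemma contains_le l h x : contains (l, h) x -> (l <= h)%Z.
Proof.
  unfold contains; simpl; intros Hx.
  destruct (Z.le_gt_cases l h) as [| hl]; [auto | apply scaled_lt in hl; lra].
Qed.

Lemma iinv_sound l h y :
  contains (l, h) y -> (0 < l \/ h < 0)%Z -> contains (iinv (l, h)) (/ y).
Proof.
  unfold contains, iinv; simpl; intros Hy sign.
  pose proof scale_pos.
  assert (nz : forall m, (m <> 0)%Z -> scaled (s * s / m) <= / scaled m <= scaled (- (- (s * s) / m))).
  { intros m m_nz. apply not_0_IZR in m_nz.
    replace (/ scaled m) with (IZR (s * s) / IZR m / IZR s)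
      by (unfold scaled; rewrite mult_IZR; field; lra).
    split; apply Rdiv_scale_le; [apply IZR_div_le | apply IZR_div_ceil_ge];
      intros ->; lra. }
  assert (sign' : 0 < scaled l \/ scaled h < 0).
  { destruct sign; [left; apply scaled_pos | right; apply scaled_neg]; auto. }
  destruct (Rinv_between _ _ _ Hy sign').
  pose proof (contains_le _ _ _ Hy).
  destruct (nz h), (nz l); lia || lra.
Qed.

Lemma isqrt_sound l h x : contains (l, h) x -> (0 < l)%Z -> contains (isqrt (l, h)) (sqrt x).
Proof.
  unfold contains, isqrt; simpl; intros Hx l_pos.
  pose proof scale_pos. assert (s_pos : (0 < s)%Z) by (apply lt_IZR; lra).
  pose proof (contains_le _ _ _ Hx).
  destruct (Z.sqrt_spec (l * s) ltac:(nia)) as [r_sq _].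
  destruct (Z.sqrt_spec (h * s) ltac:(nia)) as [_ R_sq].
  rewrite <- Z.add_1_r in R_sq.
  set (r := Z.sqrt (l * s)) in *; set (R := (Z.sqrt (h * s) + 1)%Z) in *.
  assert (r_nonneg : 0 <= scaled r) by apply scaled_nonneg, Z.sqrt_nonneg.
  assert (R_nonneg : 0 <= scaled R)
    by (apply scaled_nonneg; pose proof (Z.sqrt_nonneg (h * s)); lia).
  assert (scaled_sq : forall m, scaled m = scaled (m * s) / IZR s)
    by (intro; unfold scaled; rewrite mult_IZR; field; lra).
  split.
  - rewrite <- (sqrt_square (scaled r)) by exact r_nonneg. apply sqrt_le_1_alt.
    rewrite scaled_mul. apply Rle_trans with (scaled l); [| lra].
    rewrite (scaled_sq l). apply Rdiv_scale_le, scaled_le; lia.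
  - rewrite <- (sqrt_square (scaled R)) by exact R_nonneg. apply sqrt_le_1_alt.
    rewrite scaled_mul. apply Rle_trans with (scaled h); [lra |].
    rewrite (scaled_sq h). apply Rdiv_scale_le, scaled_le; lia.
Qed.

Lemma iatan_sound y : contains iatan (atan y).
Proof.
  unfold contains, iatan; cbn [fst snd]. rewrite !scaled_cst.
  destruct (atan_bound y). pose proof PI_4. lra.
Qed.

Lemma ipow_mul_sound I x n : contains I x -> contains (ipow_mul I n) (x ^ n).
Proof. intros Hx; induction n; [apply iconst_sound | apply imul_sound; auto]. Qed.

Lemma ipow_sound I x n : contains I x -> contains (ipow I n) (x ^ n).
Proof.
  intros Hx. destruct n as [| [| [| n]]]; try (apply ipow_mul_sound; auto).
  simpl; rewrite Rmult_1_r; apply isqr_sound, Hx.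
Qed.

Definition sign_definite (I : Z * Z) : bool := (0 <? fst I)%Z || (snd I <? 0)%Z.

Lemma sign_definite_spec I : sign_definite I = true -> (0 < fst I \/ snd I < 0)%Z.
Proof. unfold sign_definite; rewrite orb_true_iff, !Z.ltb_lt; auto. Qed.

Lemma contains_nonzero I x : contains I x -> sign_definite I = true -> x <> 0.
Proof.
  unfold contains; intros Hx [pos | neg]%sign_definite_spec;
    [apply scaled_pos in pos | apply scaled_neg in neg]; lra.
Qed.

Variable kI : Z * Z.

Fixpoint ieval (e : expr) (I : Z * Z) : option (Z * Z) :=
  match e with
  | Var => Some I
  | Cst z => Some (iconst z)
  | Param => Some kI
  | Add a b =>
      match ieval a I, ieval b I with Some A, Some B => Some (iadd A B) | _, _ => None end
  | Sub a b =>
      match ieval a I, ieval b I with Some A, Some B => Some (isub A B) | _, _ => None end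
  | Mul a b =>
      match ieval a I, ieval b I with Some A, Some B => Some (imul A B) | _, _ => None end
  | Div a b =>
      match ieval a I, ieval b I with
      | Some A, Some B => if sign_definite B then Some (imul A (iinv B)) else None
      | _, _ => None
      end
  | Sqrt a =>
      match ieval a I with
      | Some A => if (0 <? fst A)%Z then Some (isqrt A) else None
      | None => None
      end
  | Atan a => match ieval a I with Some _ => Some iatan | None => None end
  | Pow a n => match ieval a I with Some A => Some (ipow A n) | None => None end
  end.

Variable c : R.
Hypothesis kI_c : contains kI c.

Theorem ieval_sound e I J x :
  ieval e I = Some J -> contains I x -> defined c e x /\ contains J (eval c e x).
Proof.
  intros HJ Hx. revert J HJ.
  induction e as [| z | | a IHa b IHb | a IHa b IHb | a IHa b IHb | a IHa b IHb
                 | a IHa | a IHa | a IHa n]; cbn [ieval eval defined]; intros J HJ;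
  repeat match type of HJ with
    | context [ieval ?e I] =>
        let A := fresh "A" in destruct (ieval e I) as [A |]; [| discriminate]
    end;
  repeat match goal with
    | IH : forall J, Some ?A = Some J -> _ |- _ =>
        let D := fresh "D" in let H := fresh "HA" in
        destruct (IH _ eq_refl) as [D H]; clear IH
    end.
  - injection HJ as <-; auto.
  - injection HJ as <-; split; [exact Logic.I | apply iconst_sound].
  - injection HJ as <-; auto.
  - injection HJ as <-; split; [split; auto | apply iadd_sound; auto].
  - injection HJ as <-; split; [split; auto | apply isub_sound; auto].
  - injection HJ as <-; split; [split; auto | apply imul_sound; auto].
  - destruct (sign_definite A0) eqn:sign; [injection HJ as <- | discriminate].
    split; [repeat split; auto; eapply contains_nonzero; eauto |].
    destruct A0 as [l h]; apply imul_sound, iinv_sound; auto.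
    exact (sign_definite_spec _ sign).
  - destruct A as [l h]; cbn [fst] in HJ.
    destruct (Z.ltb_spec 0 l) as [l_pos |]; [injection HJ as <- | discriminate].
    split; [split; auto | apply isqrt_sound; auto].
    apply scaled_pos in l_pos; unfold contains in HA; simpl in HA; lra.
  - injection HJ as <-; split; [auto | apply iatan_sound].
  - injection HJ as <-; split; [auto | apply ipow_sound; auto].
Qed.

End DyadicIntervals.

(** * Certified sign tests *)

Definition kappa : R := r_param / sqrt 2.
Definition kappa_expr : expr := Div (Div (Cst 5) (Cst 4)) (Sqrt (Cst 2)).

Definition scale (k : Z) : Z := (2 ^ k)%Z.

Definition box (k : Z) (lo hi : Q) : Z * Z :=
  (Qfloor (lo * (scale k # 1)), Qceiling (hi * (scale k # 1))).

(* [kappa_expr] has no [Param], so the dummy enclosure [(0, 0)] of the parameter is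
   harmless when enclosing [kappa] itself. *)
Definition enclose (k : Z) (e : expr) (lo hi : Q) : option (Z * Z) :=
  match ieval k (scale k) (0, 0)%Z kappa_expr (0, 0)%Z with
  | Some kI => ieval k (scale k) kI e (box k lo hi)
  | None => None
  end.

Lemma Q2R_inject_Z z : Q2R (inject_Z z) = IZR z.
Proof. unfold Q2R, inject_Z; simpl; field. Qed.

Lemma box_sound k lo hi x :
  (0 <= k)%Z -> Q2R lo <= x <= Q2R hi -> contains (scale k) (box k lo hi) x.
Proof.
  intros k_nonneg [lo_x x_hi]. pose proof (scale_pos k (scale k) k_nonneg eq_refl) as s_pos.
  pose proof (Qle_Rle _ _ (Qfloor_le (lo * (scale k # 1)))) as fl.
  pose proof (Qle_Rle _ _ (Qle_ceiling (hi * (scale k # 1)))) as ce.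
  rewrite Q2R_inject_Z, Q2R_mult in fl, ce.
  replace (Q2R (scale k # 1)) with (IZR (scale k)) in fl, ce by (unfold Q2R; simpl; field).
  unfold contains, scaled, box; cbn [fst snd]; split;
    apply Rmult_le_reg_r with (IZR (scale k)); auto;
    unfold Rdiv; rewrite Rmult_assoc, Rinv_l, Rmult_1_r by lra; nra.
Qed.

Theorem enclose_sound k e lo hi J x :
  (0 <= k)%Z -> enclose k e lo hi = Some J -> Q2R lo <= x <= Q2R hi ->
  defined kappa e x /\ contains (scale k) J (eval kappa e x).
Proof.
  unfold enclose; intros k_nonneg HJ Hx.
  destruct (ieval _ _ _ kappa_expr _) as [kI |] eqn:EkI; [| discriminate].
  assert (kI_kappa : contains (scale k) kI kappa).
  { refine (proj2 (ieval_sound k _ k_nonneg eq_refl _ 0 _ _ _ _ 0 EkI _));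
      unfold contains, scaled; simpl; unfold Rdiv; lra. }
  exact (ieval_sound k _ k_nonneg eq_refl _ _ kI_kappa _ _ _ _ HJ (box_sound k lo hi x k_nonneg Hx)).
Qed.

Definition toQ (k m : Z) : Q := m # Z.to_pos (scale k).

Lemma Q2R_toQ k m : (0 <= k)%Z -> Q2R (toQ k m) = scaled (scale k) m.
Proof.
  intros k_nonneg. unfold toQ, Q2R, scaled; simpl.
  rewrite Z2Pos.id; [reflexivity | apply Z.pow_pos_nonneg; lia].
Qed.

Lemma Q2R_pos_of_not_Qle_bool q : Qle_bool q 0 = false -> 0 < Q2R q.
Proof.
  intros T. rewrite <- RMicromega.Q2R_0. apply Qlt_Rlt, Qnot_le_lt.
  intros Hle; apply Qle_bool_iff in Hle; congruence.
Qed.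

Definition certifies (t : Q -> Q -> bool) (P : R -> Prop) : Prop :=
  forall lo hi, t lo hi = true -> forall x, Q2R lo <= x <= Q2R hi -> P x.

Definition deriv_pos_test (k : Z) (e : expr) (lo hi : Q) : bool :=
  match enclose k e lo hi, enclose k (deriv e) lo hi with
  | Some _, Some (d, _) => (0 <? d)%Z
  | _, _ => false
  end.

Lemma deriv_pos_test_certifies k e : (0 <= k)%Z ->
  certifies (deriv_pos_test k e) (fun x => defined kappa e x /\ 0 < eval kappa (deriv e) x).
Proof.
  intros k_nonneg lo hi T x Hx. unfold deriv_pos_test in T.
  destruct (enclose k e lo hi) as [J |] eqn:Ee; [| discriminate].
  destruct (enclose k (deriv e) lo hi) as [[d u] |] eqn:Ed; [| discriminate].
  apply Z.ltb_lt, (scaled_pos k (scale k) k_nonneg eq_refl) in T.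
  split; [apply (enclose_sound k e lo hi J x k_nonneg Ee Hx) |].
  destruct (enclose_sound k _ lo hi _ x k_nonneg Ed Hx) as [_ [lower _]]; simpl in lower; lra.
Qed.

Definition midpoint (lo hi : Q) : Q := Qred ((lo + hi) * (1 # 2)).

Lemma Q2R_midpoint lo hi : Q2R (midpoint lo hi) = (Q2R lo + Q2R hi) / 2.
Proof.
  unfold midpoint. rewrite (Qeq_eqR _ _ (Qred_correct _)), Q2R_mult, Q2R_plus.
  unfold Q2R at 3; simpl; field.
Qed.

(* Positivity of [e] on [[lo, hi]] from the mean-value form [e x >= e m - sup |e'| * |x - m|],
   or from an endpoint when [e'] has a constant sign. *)
Definition pos_test (k : Z) (e : expr) (lo hi : Q) : bool :=
  let m := midpoint lo hi in
  match enclose k e lo hi, enclose k (deriv e) lo hi,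
        enclose k e m m, enclose k e lo lo, enclose k e hi hi with
  | Some _, Some (d1, d2), Some (fm, _), Some (flo, _), Some (fhi, _) =>
      negb (Qle_bool (toQ k fm - toQ k (Z.max (- d1) d2) * (m - lo)) 0)
      || (d2 <=? 0)%Z && (0 <? fhi)%Z || (0 <=? d1)%Z && (0 <? flo)%Z
  | _, _, _, _, _ => false
  end.

Lemma pos_test_certifies k e : (0 <= k)%Z -> certifies (pos_test k e) (fun x => 0 < eval kappa e x).
Proof.
  intros k_nonneg lo hi T x Hx. unfold pos_test in T.
  set (m := midpoint lo hi) in T.
  destruct (enclose k e lo hi) as [J |] eqn:Ee; [| discriminate].
  destruct (enclose k (deriv e) lo hi) as [[d1 d2] |] eqn:Ed; [| discriminate].
  destruct (enclose k e m m) as [[fm ?] |] eqn:Em; [| discriminate].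
  destruct (enclose k e lo lo) as [[flo ?] |] eqn:Elo; [| discriminate].
  destruct (enclose k e hi hi) as [[fhi ?] |] eqn:Ehi; [| discriminate].
  set (f := eval kappa e); set (f' := eval kappa (deriv e)).
  pose proof (scaled_pos k (scale k) k_nonneg eq_refl) as sc_pos.
  assert (f_deriv : forall y, Q2R lo <= y <= Q2R hi -> derivable_pt_lim f y (f' y))
    by (intros y Hy; apply deriv_correct, (enclose_sound k e lo hi J y k_nonneg Ee Hy)).
  assert (f'_bounds : forall y, Q2R lo <= y <= Q2R hi ->
                        scaled (scale k) d1 <= f' y <= scaled (scale k) d2)
    by (intros y Hy; apply (enclose_sound k _ lo hi _ y k_nonneg Ed Hy)).
  assert (at_point : forall q a u, enclose k e q q = Some (a, u) -> scaled (scale k) a <= f (Q2R q))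
    by (intros q a u Eq; apply (enclose_sound k e q q _ (Q2R q) k_nonneg Eq); lra).
  apply orb_true_iff in T as [[T | T]%orb_true_iff | T].
  - apply negb_true_iff, Q2R_pos_of_not_Qle_bool in T.
    rewrite Q2R_minus, Q2R_mult, Q2R_minus, !Q2R_toQ in T by exact k_nonneg.
    assert (f'_abs : forall y, Q2R lo <= y <= Q2R hi ->
                       Rabs (f' y) <= scaled (scale k) (Z.max (- d1) d2))
      by (intros y Hy; apply (contains_Rabs_le k _ k_nonneg eq_refl), f'_bounds, Hy).
    pose proof (Q2R_midpoint lo hi) as m_mid; fold m in m_mid.
    pose proof (mean_value_lower_bound f f' _ _ f_deriv _ _ f'_abs m_mid x Hx).
    pose proof (at_point m _ _ Em). lra.
  - apply andb_true_iff in T as [d2_nonpos%Z.leb_le fhi_pos%Z.ltb_lt].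
    apply (scaled_nonpos k (scale k) k_nonneg eq_refl) in d2_nonpos; apply sc_pos in fhi_pos.
    pose proof (at_point hi _ _ Ehi).
    assert (f (Q2R hi) <= f x); [| lra].
    apply (nonincreasing_of_deriv_nonpos f f' (Q2R lo) (Q2R hi) f_deriv); try lra.
    intros y Hy; specialize (f'_bounds y Hy); lra.
  - apply andb_true_iff in T as [d1_nonneg%Z.leb_le flo_pos%Z.ltb_lt].
    apply (scaled_nonneg k (scale k) k_nonneg eq_refl) in d1_nonneg; apply sc_pos in flo_pos.
    pose proof (at_point lo _ _ Elo).
    assert (f (Q2R lo) <= f x); [| lra].
    apply (nondecreasing_of_deriv_nonneg f f' (Q2R lo) (Q2R hi) f_deriv); try lra.
    intros y Hy; specialize (f'_bounds y Hy); lra.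
Qed.

Lemma certifies_orb t1 t2 P :
  certifies t1 P -> certifies t2 P -> certifies (fun lo hi => t1 lo hi || t2 lo hi) P.
Proof. intros C1 C2 lo hi [T | T]%orb_true_iff; [apply (C1 lo hi T) | apply (C2 lo hi T)]. Qed.

Fixpoint covers (t : Q -> Q -> bool) (lo : Q) (pts : list Q) (hi : Q) : bool :=
  match pts with
  | nil => t lo hi
  | cons p pts => t lo p && covers t p pts hi
  end.

Lemma covers_certifies t P pts : certifies t P -> certifies (fun lo hi => covers t lo pts hi) P.
Proof.
  intros C. induction pts as [| p pts IH]; intros lo hi T x Hx; [exact (C lo hi T x Hx) |].
  apply andb_true_iff in T as [T1 T2].
  destruct (Rle_dec x (Q2R p)); [apply (C lo p T1) | apply (IH p hi T2)]; lra.
Qed.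

(** * The derivative of the solid angle *)

Definition corner_partial (y z : R) : R := z / ((1 + y ^ 2) * sqrt (1 + y ^ 2 + z ^ 2)).

Lemma Fcorner_deriv_simplify y z dy dz s : 0 < s -> s * s = 1 + y ^ 2 + z ^ 2 ->
  / (1 + (y * z / s) ^ 2) * (((dy * z + y * dz) * s - (2 * y * dy + 2 * z * dz) / (2 * s) * (y * z)) / s²)
  = z / ((1 + y ^ 2) * s) * dy + y / ((1 + z ^ 2) * s) * dz.
Proof.
  intros s_pos s_sq. unfold Rsqr.
  assert (0 < 1 + y ^ 2) by nra. assert (0 < 1 + z ^ 2) by nra.
  replace (1 + (y * z / s) ^ 2) with ((1 + y ^ 2) * (1 + z ^ 2) / (s * s))
    by (replace ((1 + y ^ 2) * (1 + z ^ 2)) with (s * s + (y * z) ^ 2) by (rewrite s_sq; ring);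
        field; lra).
  transitivity (((dy * z + y * dz) * (s * s) - (y * dy + z * dz) * (y * z))
                / (s * (1 + y ^ 2) * (1 + z ^ 2))); [field; repeat split; lra |].
  rewrite s_sq; field; repeat split; lra.
Qed.

Lemma derivable_pt_lim_Fcorner fy fz l dy dz :
  derivable_pt_lim fy l dy -> derivable_pt_lim fz l dz ->
  derivable_pt_lim (fun t => Fcorner 1 (fy t) (fz t)) l
    (corner_partial (fy l) (fz l) * dy + corner_partial (fz l) (fy l) * dz).
Proof.
  intros Dy Dz.
  set (S t := 1 + fy t ^ 2 + fz t ^ 2).
  assert (S_pos : forall t, 0 < S t) by (intro; unfold S; nra).
  apply derivable_pt_lim_ext with (f := fun t => atan (fy t * fz t / sqrt (S t))).
  { intros t; unfold Fcorner, S; now rewrite pow1, Rmult_1_l. }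
  assert (DS : derivable_pt_lim S l (2 * fy l * dy + 2 * fz l * dz)).
  { assert (Dsq : forall f d, derivable_pt_lim f l d -> derivable_pt_lim (fun t => f t ^ 2) l (2 * f l * d)).
    { intros f d Df. eapply derivable_pt_lim_eq_deriv;
        [apply (derivable_pt_lim_comp f (fun u => u ^ 2)); [exact Df | apply derivable_pt_lim_pow] |].
      simpl; ring. }
    eapply derivable_pt_lim_eq_deriv.
    { apply (derivable_pt_lim_plus (fun t => 1 + fy t ^ 2) (fun t => fz t ^ 2));
        [| apply Dsq, Dz].
      apply (derivable_pt_lim_plus (fun _ => 1) (fun t => fy t ^ 2));
        [apply derivable_pt_lim_const | apply Dsq, Dy]. }
    ring. }
  assert (D_root : derivable_pt_lim (fun t => sqrt (S t)) l
                     ((2 * fy l * dy + 2 * fz l * dz) / (2 * sqrt (S l)))).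
  { eapply derivable_pt_lim_eq_deriv;
      [apply (derivable_pt_lim_comp S sqrt); [exact DS | apply derivable_pt_lim_sqrt, S_pos] |].
    unfold Rdiv; ring. }
  assert (root_pos : 0 < sqrt (S l)) by apply sqrt_lt_R0, S_pos.
  pose proof (derivable_pt_lim_div (fun t => fy t * fz t) (fun t => sqrt (S t)) l _ _
                (derivable_pt_lim_mult fy fz l dy dz Dy Dz) D_root ltac:(lra)) as D_quot.
  eapply derivable_pt_lim_eq_deriv;
    [exact (derivable_pt_lim_comp _ atan l _ _ D_quot (derivable_pt_lim_atan _)) |].
  unfold corner_partial. replace (1 + fz l ^ 2 + fy l ^ 2) with (S l) by (unfold S; ring).
  apply Fcorner_deriv_simplify; [exact root_pos |].
  rewrite sqrt_sqrt by (apply Rlt_le, S_pos); reflexivity.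
Qed.

Definition y1_expr : expr := Sub Param (Div Var (Cst 2)).
Definition y2_expr : expr := Add Param (Div Var (Cst 2)).
Definition z1_expr : expr := Sub Param (Div (Cst 1) (Mul (Cst 2) Var)).
Definition z2_expr : expr := Add Param (Div (Cst 1) (Mul (Cst 2) Var)).

Lemma derivable_pt_lim_sides l : l <> 0 ->
  derivable_pt_lim y1 l (- / 2) /\ derivable_pt_lim y2 l (/ 2) /\
  derivable_pt_lim z1 l (/ (2 * l ^ 2)) /\ derivable_pt_lim z2 l (- / (2 * l ^ 2)).
Proof.
  intros l_nz.
  change y1 with (eval kappa y1_expr); change y2 with (eval kappa y2_expr).
  change z1 with (eval kappa z1_expr); change z2 with (eval kappa z2_expr).
  repeat split; apply derivable_pt_lim_eval; simpl; try (repeat split; lra); field; auto.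
Qed.

Definition corner_partial_expr (y z : expr) : expr :=
  Div z (Mul (Add (Cst 1) (Pow y 2)) (Sqrt (Add (Add (Cst 1) (Pow y 2)) (Pow z 2)))).

(* The chain rule over the four corners, with [y1' = -1/2], [y2' = 1/2], [z1' = 1/(2 l^2)]
   and [z2' = -1/(2 l^2)]. *)
Definition Omega_deriv_expr : expr :=
  let P := corner_partial_expr in
  Sub (Mul (Div (Cst 1) (Cst 2))
        (Sub (Sub (Add (P y2_expr z2_expr) (P y1_expr z2_expr)) (P y2_expr z1_expr))
           (P y1_expr z1_expr)))
      (Mul (Div (Cst 1) (Mul (Cst 2) (Pow Var 2)))
        (Add (Sub (P z2_expr y2_expr) (P z2_expr y1_expr))
           (Sub (P z1_expr y2_expr) (P z1_expr y1_expr)))).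

Lemma eval_Omega_deriv_expr l : eval kappa Omega_deriv_expr l =
  1 / 2 * (corner_partial (y2 l) (z2 l) + corner_partial (y1 l) (z2 l)
           - corner_partial (y2 l) (z1 l) - corner_partial (y1 l) (z1 l))
  - 1 / (2 * l ^ 2) * ((corner_partial (z2 l) (y2 l) - corner_partial (z2 l) (y1 l))
                       + (corner_partial (z1 l) (y2 l) - corner_partial (z1 l) (y1 l))).
Proof. reflexivity. Qed.

Lemma derivable_pt_lim_Omega l : l <> 0 -> derivable_pt_lim Omega l (eval kappa Omega_deriv_expr l).
Proof.
  intros l_nz. destruct (derivable_pt_lim_sides l l_nz) as (Dy1 & Dy2 & Dz1 & Dz2).
  pose proof (derivable_pt_lim_Fcorner _ _ _ _ _ Dy2 Dz2) as C22.
  pose proof (derivable_pt_lim_Fcorner _ _ _ _ _ Dy1 Dz2) as C12.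
  pose proof (derivable_pt_lim_Fcorner _ _ _ _ _ Dy2 Dz1) as C21.
  pose proof (derivable_pt_lim_Fcorner _ _ _ _ _ Dy1 Dz1) as C11.
  eapply derivable_pt_lim_eq_deriv.
  - exact (derivable_pt_lim_plus _ _ l _ _
             (derivable_pt_lim_minus _ _ l _ _ (derivable_pt_lim_minus _ _ l _ _ C22 C12) C21) C11).
  - rewrite eval_Omega_deriv_expr; field; auto.
Qed.

(* At [l = 1] the rectangle is a square: [y_i 1 = z_i 1]. *)
Lemma Omega_deriv_at_1 : eval kappa Omega_deriv_expr 1 = 0.
Proof.
  rewrite eval_Omega_deriv_expr.
  replace (z2 1) with (y2 1) by (unfold y2, z2; f_equal; field).
  replace (z1 1) with (y1 1) by (unfold y1, z1; f_equal; field).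
  field.
Qed.

Lemma Fcorner_rescaled t w z y : 0 < t -> y = w / (2 * t) ->
  Fcorner 1 y z = atan (w * z / sqrt (4 * t ^ 2 * (1 + z ^ 2) + w ^ 2)).
Proof.
  intros t_pos ->. unfold Fcorner. set (N := 4 * t ^ 2 * (1 + z ^ 2) + w ^ 2).
  assert (N_pos : 0 < N) by (unfold N; nra).
  assert (root_pos : 0 < sqrt N) by now apply sqrt_lt_R0.
  replace (1 ^ 2 + (w / (2 * t)) ^ 2 + z ^ 2) with ((sqrt N / (2 * t)) ^ 2).
  - rewrite sqrt_pow2 by (apply Rlt_le, Rdiv_lt_0_compat; lra).
    f_equal; field; lra.
  - replace ((sqrt N / (2 * t)) ^ 2) with (sqrt N * sqrt N / (4 * t ^ 2)) by (field; lra).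
    rewrite sqrt_sqrt by lra. unfold N; field; lra.
Qed.

Definition tail_corner_expr (w z : expr) : expr :=
  Atan (Div (Mul w z)
          (Sqrt (Add (Mul (Mul (Cst 4) (Pow Var 2)) (Add (Cst 1) (Pow z 2))) (Pow w 2)))).
Definition w1_expr : expr := Sub (Mul (Mul (Cst 2) Param) Var) (Cst 1).
Definition w2_expr : expr := Add (Mul (Mul (Cst 2) Param) Var) (Cst 1).

(* [Omega (1/t)] as an expression in [t] that stays defined at [t = 0]: for [l = 1/t],
   [y_i l = w_i / (2 t)] and [z_i l = y_i t]. *)
Definition Omega_inv_expr : expr :=
  let G := tail_corner_expr in
  Add (Sub (Sub (G w2_expr y2_expr) (G w1_expr y2_expr)) (G w2_expr y1_expr)) (G w1_expr y1_expr).

Lemma Omega_inv t : 0 < t -> Omega (/ t) = eval kappa Omega_inv_expr t.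
Proof.
  intros t_pos. unfold Omega, solid_angle_rect.
  assert (0 < sqrt 2) by (apply sqrt_lt_R0; lra).
  replace (z2 (/ t)) with (eval kappa y2_expr t)
    by (unfold z2; simpl; unfold kappa; field; lra).
  replace (z1 (/ t)) with (eval kappa y1_expr t)
    by (unfold z1; simpl; unfold kappa; field; lra).
  rewrite !(Fcorner_rescaled t (eval kappa w2_expr t) _ (y2 (/ t)))
    by (auto; unfold y2; simpl; unfold kappa; field; lra).
  rewrite !(Fcorner_rescaled t (eval kappa w1_expr t) _ (y1 (/ t)))
    by (auto; unfold y1; simpl; unfold kappa; field; lra).
  reflexivity.
Qed.

(** * Certificates and the location of the maximum *)

Definition lmax_lo : Q := 166977459936793782921 # 100000000000000000000.
Definition lmax_hi : Q := 1669774599367937829217 # 1000000000000000000000.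

(* Written with [if] rather than [||] so that the costly high-precision test only runs when
   the cheap one fails. *)
Definition pos_test_adaptive (e : expr) (lo hi : Q) : bool :=
  if pos_test 40 e lo hi then true else pos_test 110 e lo hi.

Lemma pos_test_adaptive_certifies e :
  certifies (pos_test_adaptive e) (fun x => 0 < eval kappa e x).
Proof. exact (certifies_orb _ _ _ (pos_test_certifies 40 e ltac:(lia)) (pos_test_certifies 110 e ltac:(lia))). Qed.

(* The subdivision points were found by bisection. *)
Lemma convex_near_1_certificate :
  covers (deriv_pos_test 40 Omega_deriv_expr) 1
    [8405385 # 8388608; 4211081 # 4194304; 8438939 # 8388608; 2113929 # 2097152]%list (101 # 100) = true.
Proof. vm_cast_no_check (eq_refl true). Qed.

Lemma increasing_certificate :
  covers (pos_test_adaptive Omega_deriv_expr) (101 # 100)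
    [16978543 # 16777216; 4261413 # 4194304; 8589935 # 8388608; 2164261 # 2097152;
     8724153 # 8388608; 4395631 # 4194304; 17850959 # 16777216; 9059697 # 8388608;
     18387829 # 16777216; 2332033 # 2097152; 18924699 # 16777216; 9596567 # 8388608;
     19461569 # 16777216; 2499805 # 2097152; 20535311 # 16777216; 10536091 # 8388608;
     21609053 # 16777216; 5536481 # 4194304; 22682795 # 16777216; 11609833 # 8388608;
     23756537 # 16777216; 759169 # 524288; 24830279 # 16777216; 12683575 # 8388608;
     25904021 # 16777216; 6610223 # 4194304; 26977763 # 16777216; 13623099 # 8388608;
     27514633 # 16777216; 6945767 # 4194304; 13958643 # 8388608]%list
    lmax_lo = true.
Proof. vm_cast_no_check (eq_refl true). Qed.

Lemma decreasing_certificate :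
  covers (pos_test_adaptive (Sub (Cst 0) Omega_deriv_expr)) lmax_hi
    [7011931 # 4194304; 28114833 # 16777216; 28249051 # 16777216; 14258743 # 8388608;
     28785921 # 16777216; 3665349 # 2097152; 29859663 # 16777216; 15198267 # 8388608;
     7867569 # 4194304; 16272009 # 8388608; 1050555 # 524288; 17345751 # 8388608;
     18419493 # 8388608; 19493235 # 8388608; 20566977 # 8388608; 21640719 # 8388608;
     22714461 # 8388608; 49723889 # 16777216; 6752357 # 2097152; 58313823 # 16777216;
     31304395 # 8388608; 66903757 # 16777216; 18873423 # 4194304; 84083627 # 16777216;
     46336781 # 8388608; 101263497 # 16777216; 59221683 # 8388608; 135623235 # 16777216;
     4775097 # 524288]%list
    10 = true.
Proof. vm_cast_no_check (eq_refl true). Qed.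

Lemma tail_certificate :
  covers (deriv_pos_test 40 Omega_inv_expr) 0
    [41943 # 2097152; 1006633 # 16777216; 1342177 # 16777216]%list (1 # 10) = true.
Proof. vm_cast_no_check (eq_refl true). Qed.

Lemma Omega_deriv_nonneg_near_1 x : 1 <= x <= 101 / 100 -> 0 <= eval kappa Omega_deriv_expr x.
Proof.
  pose proof (covers_certifies _ _ _ (deriv_pos_test_certifies 40 Omega_deriv_expr ltac:(lia))
                _ _ convex_near_1_certificate) as C.
  assert (convex : forall y, 1 <= y <= 101 / 100 -> defined kappa Omega_deriv_expr y /\
                               0 < eval kappa (deriv Omega_deriv_expr) y)
    by (intros y Hy; apply C; unfold Q2R; simpl; lra).
  intros Hx. rewrite <- Omega_deriv_at_1.
  apply (nondecreasing_of_deriv_nonneg _ (eval kappa (deriv Omega_deriv_expr)) 1 (101 / 100));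
    try lra; intros y Hy; [apply deriv_correct | apply Rlt_le]; apply convex, Hy.
Qed.

Lemma Omega_deriv_pos x : 101 / 100 <= x <= Q2R lmax_lo -> 0 < eval kappa Omega_deriv_expr x.
Proof.
  intros Hx. apply (covers_certifies _ _ _ (pos_test_adaptive_certifies _) _ _ increasing_certificate).
  unfold Q2R at 1; simpl; lra.
Qed.

Lemma Omega_deriv_neg x : Q2R lmax_hi <= x <= 10 -> eval kappa Omega_deriv_expr x < 0.
Proof.
  intros Hx. enough (0 < 0 - eval kappa Omega_deriv_expr x) by lra.
  apply (covers_certifies _ _ _ (pos_test_adaptive_certifies _) _ _ decreasing_certificate).
  unfold Q2R at 2; simpl; lra.
Qed.

Lemma Omega_inv_nondecreasing u v :
  0 <= u -> u <= v -> v <= 1 / 10 -> eval kappa Omega_inv_expr u <= eval kappa Omega_inv_expr v.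
Proof.
  pose proof (covers_certifies _ _ _ (deriv_pos_test_certifies 40 Omega_inv_expr ltac:(lia))
                _ _ tail_certificate) as C.
  assert (increasing : forall y, 0 <= y <= 1 / 10 -> defined kappa Omega_inv_expr y /\
                                   0 < eval kappa (deriv Omega_inv_expr) y)
    by (intros y Hy; apply C; unfold Q2R; simpl; lra).
  apply (nondecreasing_of_deriv_nonneg _ (eval kappa (deriv Omega_inv_expr)) 0 (1 / 10));
    intros y Hy; [apply deriv_correct | apply Rlt_le]; apply increasing, Hy.
Qed.

Lemma Omega_nondecreasing_near_1 u v : 1 <= u -> u <= v -> v <= 101 / 100 -> Omega u <= Omega v.
Proof.
  apply (nondecreasing_of_deriv_nonneg Omega (eval kappa Omega_deriv_expr)).
  - intros y Hy; apply derivable_pt_lim_Omega; lra.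
  - exact Omega_deriv_nonneg_near_1.
Qed.

Lemma Omega_increasing u v : 101 / 100 <= u -> u < v -> v <= Q2R lmax_lo -> Omega u < Omega v.
Proof.
  apply (increasing_of_deriv_pos Omega (eval kappa Omega_deriv_expr)).
  - intros y Hy; apply derivable_pt_lim_Omega; lra.
  - exact Omega_deriv_pos.
Qed.

Lemma Omega_nonincreasing u v : Q2R lmax_hi <= u -> u <= v -> v <= 10 -> Omega v <= Omega u.
Proof.
  apply (nonincreasing_of_deriv_nonpos Omega (eval kappa Omega_deriv_expr)).
  - intros y Hy; apply derivable_pt_lim_Omega; unfold Q2R in Hy; simpl in Hy; lra.
  - intros y Hy; apply Rlt_le, Omega_deriv_neg, Hy.
Qed.

Lemma Omega_le_Omega_10 l : 10 <= l -> Omega l <= Omega 10.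
Proof.
  intros Hl.
  rewrite <- (Rinv_inv l), <- (Rinv_inv 10), !Omega_inv by (apply Rinv_0_lt_compat; lra).
  assert (/ l <= / 10) by (apply Rinv_le_contravar; lra).
  assert (0 < / l) by (apply Rinv_0_lt_compat; lra).
  apply Omega_inv_nondecreasing; lra.
Qed.

Lemma Omega_continuous x : 0 < x -> continuity_pt Omega x.
Proof.
  intros x_pos; apply derivable_continuous_pt.
  exists (eval kappa Omega_deriv_expr x); apply derivable_pt_lim_Omega; lra.
Qed.

Lemma Omega_le_lmax_lo l : 1 <= l <= Q2R lmax_lo -> Omega l <= Omega (Q2R lmax_lo).
Proof.
  intros Hl. assert (101 / 100 < Q2R lmax_lo) by (unfold Q2R; simpl; lra).
  destruct (Rle_dec l (101 / 100)).
  - apply Rle_trans with (Omega (101 / 100));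
      [apply Omega_nondecreasing_near_1 | apply Rlt_le, Omega_increasing]; lra.
  - destruct (Req_dec l (Q2R lmax_lo)) as [-> | ne]; [lra |].
    apply Rlt_le, Omega_increasing; lra.
Qed.

Lemma Omega_1_lt_lmax_lo : Omega 1 < Omega (Q2R lmax_lo).
Proof.
  assert (101 / 100 < Q2R lmax_lo) by (unfold Q2R; simpl; lra).
  apply Rle_lt_trans with (Omega (101 / 100));
    [apply Omega_nondecreasing_near_1 | apply Omega_increasing]; lra.
Qed.

Lemma Omega_le_lmax_hi l : Q2R lmax_hi <= l -> Omega l <= Omega (Q2R lmax_hi).
Proof.
  intros Hl. assert (Q2R lmax_hi < 10) by (unfold Q2R; simpl; lra).
  destruct (Rle_dec l 10); [apply Omega_nonincreasing; lra |].
  apply Rle_trans with (Omega 10); [apply Omega_le_Omega_10 | apply Omega_nonincreasing]; lra.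
Qed.

Theorem mainTheorem4 :
  exists lmax : R,
    1.66977459936793782921 <= lmax < 1.66977459936793782922 /\
    (forall l : R, 1 <= l -> Omega l <= Omega lmax) /\
    Omega 1 < Omega lmax.
Proof.
  change 1.66977459936793782921 with (Q2R lmax_lo).
  assert (lo_le_hi : Q2R lmax_lo <= Q2R lmax_hi) by (unfold Q2R; simpl; lra).
  assert (hi_lt : Q2R lmax_hi < 1.66977459936793782922) by (unfold Q2R; simpl; lra).
  destruct (max_attained_in_interval Omega 1 (Q2R lmax_lo) (Q2R lmax_hi)) as (M & HM & M_max);
    auto using Omega_le_lmax_lo, Omega_le_lmax_hi.
  { intros x Hx; apply Omega_continuous; unfold Q2R in Hx; simpl in Hx; lra. }
  exists M; repeat split; try lra; [exact M_max |].
  apply Rlt_le_trans with (Omega (Q2R lmax_lo)); [exact Omega_1_lt_lmax_lo |].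
  apply M_max; unfold Q2R; simpl; lra.
Qed.
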